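(* In the system described in the context, there is only one installed view in the system at any time: if a view $w$ is installed in the system, then any previously installed view $v<w$ was uninstalled and will not be installed anymore.
   Context: Servers $S=\{s_1,\dots,s_n\}$ in an asynchronous crash-prone message-passing system with reliable links. Views form a sequence $v_0,v_1,\dots$ with $v_{k+1}=v_k.succ$; $v<w$ means $w$ is obtained from $v$ by applying $succ$ one or more times. Each server has a current view $s.cview$ (initially $v_0$) and a weight in each view. A weighted majority for view $v$ is a set of servers whose weights in $v$ sum to more than $n/2$. View changer run by each server $s$ with $s.cview=v$: when a local timeout for $v$ expires it sends $\langle\text{change\_view},v.succ\rangle$ to all servers; once it has received or sent change\_view for $v.succ$ it forwards it if not already sent, disables read/write operations, sends $\langle\text{state\_update},(val,ts,cid),v,w\rangle$ to all servers (its register state and weight $w$ in $v$) — at this point it has uninstalled $v$ — waits until it has state\_update messages for view $v$ whose weights sum to more than $n/2$, adopts the value with lexicographically largest $(ts,cid)$, then sets $s.cview\leftarrow v.succ$ (installs $v.succ$) and re-enables read/write operations. A view $v$ is installed in the system once at least one server installs $v$ and every server $s$ satisfies $s.cview\le v$; when $v.succ$ is installed, $v$ is said to be uninstalled from the system. *)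

From Stdlib Require List.
From HB Require Import structures.
From mathcomp Require Import all_boot all_order all_algebra.
Set Implicit Arguments. Unset Strict Implicit. Unset Printing Implicit Defensive.
Import Order.TTheory GRing.Theory Num.Theory.
Local Open Scope ring_scope.

Section Model.

Variable Val : Type.
(* number of servers; servers are s_1..s_n, represented by 'I_n *)
Variable n : nat.
Variable weight : 'I_n -> nat -> rat.

(* views v_0, v_1, ... are represented by their index; v.succ = v.+1,
   and v < w (as views) is v < w on nat. *)
Definition View := nat.

(* register state (val, ts, cid) *)
Definition RegState := (Val * nat * nat)%type.

Inductive Msg :=
| ChangeView (v : View)
| StateUpdate (sender : 'I_n) (r : RegState) (v : View) (w : rat).

Record LState := mkL {
  cview : View;
  reg : RegState;
  rw_enabled : bool;
  uninstalled : bool;      (* has uninstalled cview, waiting for state updates *)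
  cv_sent : bool;          (* has sent change_view for cview.succ *)
  crashed : bool;
  inbox : seq Msg
}.

Record GState := mkG {
  loc : 'I_n -> LState;
  sent : seq ('I_n * Msg)      (* messages sent so far, with destination *)
}.

Definition upd (f : 'I_n -> LState) (s : 'I_n) (x : LState) : 'I_n -> LState :=
  fun j => if j == s then x else f j.

Definition broadcast (m : Msg) : seq ('I_n * Msg) := [seq (j, m) | j <- enum 'I_n].

Definition lex_le (a b : nat * nat) : bool :=
  (a.1 < b.1)%N || ((a.1 == b.1) && (a.2 <= b.2)%N).

Definition su_of (v : View) (m : Msg) : option ('I_n * RegState * rat) :=
  match m with
  | StateUpdate q r v' w => if v' == v then Some (q, r, w) else None
  | _ => None
  end.

Definition su_quorum (ib : seq Msg) (v : View) (Q : seq ('I_n * RegState * rat)) : Prop :=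
  (forall x, List.In x Q -> exists m, List.In m ib /\ su_of v m = Some x) /\
  uniq [seq x.1.1 | x <- Q] /\
  (n%:R / 2 < \sum_(x <- Q) x.2).

Definition ts_cid (r : RegState) : nat * nat := (r.1.2, r.2).

Inductive step : GState -> GState -> Prop :=
| StepDeliver g d m :
    List.In (d, m) (sent g) ->
    step g (mkG (upd (loc g) d
                  (let l := loc g d in
                   mkL (cview l) (reg l) (rw_enabled l) (uninstalled l) (cv_sent l)
                       (crashed l) (rcons (inbox l) m)))
                (sent g))
| StepCrash g s :
    let l := loc g s in
    step g (mkG (upd (loc g) s
                  (mkL (cview l) (reg l) (rw_enabled l) (uninstalled l) (cv_sent l)
                       true (inbox l)))
                (sent g))
(* read/write operations (over-approximated): while enabled, they may
   change the register state arbitrarily *)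
| StepRW g s r :
    let l := loc g s in
    ~~ crashed l -> rw_enabled l ->
    step g (mkG (upd (loc g) s
                  (mkL (cview l) r (rw_enabled l) (uninstalled l) (cv_sent l)
                       (crashed l) (inbox l)))
                (sent g))
| StepTimeout g s :
    let l := loc g s in
    ~~ crashed l -> ~~ uninstalled l -> ~~ cv_sent l ->
    step g (mkG (upd (loc g) s
                  (mkL (cview l) (reg l) (rw_enabled l) (uninstalled l) true
                       (crashed l) (inbox l)))
                (sent g ++ broadcast (ChangeView (cview l).+1)))
| StepUninstall g s :
    let l := loc g s in
    ~~ crashed l -> ~~ uninstalled l ->
    (cv_sent l \/ List.In (ChangeView (cview l).+1) (inbox l)) ->
    step g (mkG (upd (loc g) s
                  (mkL (cview l) (reg l) false true true (crashed l) (inbox l)))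
                (sent g ++ (if cv_sent l then [::]
                            else broadcast (ChangeView (cview l).+1))
                        ++ broadcast (StateUpdate s (reg l) (cview l)
                                                  (weight s (cview l)))))
| StepInstall g s Q x :
    let l := loc g s in
    ~~ crashed l -> uninstalled l ->
    su_quorum (inbox l) (cview l) Q ->
    List.In x Q ->
    (forall y, List.In y Q -> lex_le (ts_cid y.1.2) (ts_cid x.1.2)) ->
    step g (mkG (upd (loc g) s
                  (mkL (cview l).+1 x.1.2 true false false (crashed l) (inbox l)))
                (sent g)).

Definition initial (g : GState) : Prop :=
  (exists r0 : 'I_n -> RegState,
     forall s, loc g s = mkL 0 (r0 s) true false false false [::]) /\
  sent g = [::].

Definition valid_execution (exec : nat -> GState) : Prop :=
  initial (exec 0) /\
  forall t, step (exec t) (exec t.+1) \/ exec t.+1 = exec t.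

End Model.

Definition sys_installed (Val : Type) (n : nat) (exec : nat -> GState Val n)
    (t : nat) (v : View) : Prop :=
  (exists (s : 'I_n) (t0 : nat), (t0 <= t)%N /\ cview (loc (exec t0) s) = v) /\
  (forall s : 'I_n, (cview (loc (exec t) s) <= v)%N).

Definition sys_uninstalled (Val : Type) (n : nat) (exec : nat -> GState Val n)
    (t : nat) (v : View) : Prop :=
  exists t1, (t1 <= t)%N /\ sys_installed exec t1 v.+1.

From mathcomp Require Import all_boot all_order all_algebra.

(* Every server's view starts at 0, never decreases and advances by at most
   one per step. So the first time some server passes v it is at exactly v.+1
   while all others are at most v.+1: v.+1 is then installed in the system,
   before w > v is. And the server that reached w stays above v forever, so
   v cannot be installed again. *)

Lemma step_cview Val n weight (g g' : GState Val n) :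
  step weight g g' -> forall j,
  (cview (loc g j) <= cview (loc g' j) <= (cview (loc g j)).+1)%N.
Proof.
by case=> {g g'} /= *; rewrite /upd; case: eqP => [->|] /=; rewrite ?leqnn ?leqnSn.
Qed.

Section Execution.

Context {Val : Type} {n : nat} {weight : 'I_n -> nat -> rat}.
Context {exec : nat -> GState Val n}.
Hypothesis exec_valid : valid_execution weight exec.

Local Notation cv t j := (cview (loc (exec t) j)).

Lemma cview_exec0 j : cv 0 j = 0%N.
Proof. by case: exec_valid => [[[r0 ->] _] _]. Qed.

Lemma cview_execS t j : (cv t j <= cv t.+1 j <= (cv t j).+1)%N.
Proof.
case: exec_valid => _ /(_ t) [/step_cview //|->].
by rewrite leqnn leqnSn.
Qed.

Lemma cview_exec_mono j : {homo (fun t => cv t j) : t t' / (t <= t')%N}.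
Proof.
apply: homo_leq => [//|????|t]; first exact: leq_trans.
by case/andP: (cview_execS t j).
Qed.

Lemma cview_gt_uninstalled v u s : (v < cv u s)%N -> sys_uninstalled exec u v.
Proof.
move=> v_lt_s.
pose past_v t := [exists j, v < cv t j]%N.
have past_u : past_v u by apply/existsP; exists s.
have [[|t1] /existsP[j v_lt_j] t1_min] := ex_minnP (ex_intro past_v u past_u).
  by rewrite cview_exec0 in v_lt_j.
have le_v k : (cv t1 k <= v)%N.
  rewrite leqNgt; apply/negP => v_lt_k; suff: (t1 < t1)%N by rewrite ltnn.
  by apply: t1_min; apply/existsP; exists k.
have le_Sv k : (cv t1.+1 k <= v.+1)%N.
  by case/andP: (cview_execS t1 k) => _ /leq_trans; apply; rewrite ltnS.
exists t1.+1; split; first exact: t1_min.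
split=> //; exists j, t1.+1; split=> //.
by apply/eqP; rewrite eqn_leq le_Sv v_lt_j.
Qed.

Lemma installed_not_reinstalled {t w v} : sys_installed exec t w -> (v < w)%N ->
  forall t', (t <= t')%N -> ~ sys_installed exec t' v.
Proof.
move=> [[s [t0 [t0_le w_s]]] _] v_lt_w t' t_le [_ /(_ s) s_le_v].
have w_le : (w <= cv t' s)%N.
  by rewrite -w_s; apply: cview_exec_mono; exact: leq_trans t_le.
by have := leq_trans v_lt_w (leq_trans w_le s_le_v); rewrite ltnn.
Qed.

End Execution.

Theorem lemma2 (Val : Type) (n : nat) (weight : 'I_n -> nat -> rat)
    (exec : nat -> GState Val n) :
  valid_execution weight exec ->
  forall (t : nat) (w : View), sys_installed exec t w ->
  forall (v t0 : nat), (v < w)%N -> (t0 <= t)%N -> sys_installed exec t0 v ->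
    sys_uninstalled exec t v /\
    (forall t', (t <= t')%N -> ~ sys_installed exec t' v).
Proof.
move=> exec_valid t w w_inst v _ v_lt_w _ _; split.
- have [[s [t0 [t0_le w_s]]] _] := w_inst.
  have [t1 [t1_le v1_inst]] : sys_uninstalled exec t0 v.
    by apply: (cview_gt_uninstalled exec_valid v t0 s); rewrite w_s.
  by exists t1; split; first exact: leq_trans t0_le.
- exact (installed_not_reinstalled exec_valid w_inst v_lt_w).
Qed.
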